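(* Let $(G,\lambda)$ be a finite abelian $2$-group with a nonsingular symmetric linking pairing, let $k\ge1$, and assume the layer form $b_k$ is alternating. Define $q_k:H_k(G)\to\mathbb Q/\mathbb Z$ by $q_k(\bar x)=2^{k-1}\lambda(x,x)$ for $x\in G$ representing $\bar x\in H_k(G)=G/G_k$. Then $q_k$ is well-defined and satisfies $q_k(\bar x+\bar y)-q_k(\bar x)-q_k(\bar y)=2^k\lambda(x,y)\in\mathbb Q/\mathbb Z$ for all $\bar x,\bar y\in H_k(G)$.
   Context: A linking pairing is a symmetric bilinear map $\lambda:G\times G\to\mathbb Q/\mathbb Z$, nonsingular if its adjoint $G\to\mathrm{Hom}(G,\mathbb Q/\mathbb Z)$ is an isomorphism. $G_k=\{x\in G:2^kx=0\}$, $G_0=0$, $P_k(G)=G_k/(G_{k-1}+2G_{k+1})$, and $b_k(\bar x,\bar y)=2^k\lambda(x,y)\bmod2$ is the induced $\mathbb F_2$-form on $P_k(G)$; alternating means $b_k(v,v)=0$ for all $v$ (this is the ''Type E'' case). *)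

From mathcomp Require Import all_boot all_order all_algebra.
Set Implicit Arguments. Unset Strict Implicit. Unset Printing Implicit Defensive.
Import Order.TTheory GRing.Theory Num.Theory.
Local Open Scope ring_scope.

(* Q/Z is encoded by rat taken modulo the integers: a map into Q/Z is given by
   a rat-valued lift, and equalities in Q/Z are congruences modulo Z. *)
Definition eqQZ (a b : rat) : Prop := (a - b) \is a Num.int.

Section Linking.
Variable G : finZmodType.

Definition QZhom (phi : G -> rat) : Prop :=
  forall x y, eqQZ (phi (x + y)) (phi x + phi y).

Definition linking_pairing (lam : G -> G -> rat) : Prop :=
  (forall x y, eqQZ (lam x y) (lam y x)) /\
  (forall x y z, eqQZ (lam (x + y) z) (lam x z + lam y z)) /\
  (forall x y z, eqQZ (lam x (y + z)) (lam x y + lam x z)).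

(* the adjoint x |-> lam x (.) : G -> Hom(G, Q/Z) is an isomorphism
   (it is a homomorphism by bilinearity; here: bijective, with equality
   in Hom(G,Q/Z) being pointwise equality in Q/Z) *)
Definition nonsingular (lam : G -> G -> rat) : Prop :=
  (forall x x', (forall y, eqQZ (lam x y) (lam x' y)) -> x = x') /\
  (forall phi : G -> rat, QZhom phi ->
     exists x, forall y, eqQZ (lam x y) (phi y)).

Definition Gk (k : nat) (x : G) : bool := x *+ (2 ^ k) == 0.

(* b_k alternating on P_k(G) = G_k/(G_{k-1} + 2 G_{k+1}):
   b_k(v,v) = 2^k lam(v,v) mod 2 vanishes for every v in G_k *)
Definition layer_alternating (lam : G -> G -> rat) (k : nat) : Prop :=
  forall v, Gk k v -> ((2 ^+ k * lam v v) / 2) \is a Num.int.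

Definition qk (lam : G -> G -> rat) (k : nat) (x : G) : rat :=
  2 ^+ k.-1 * lam x x.
End Linking.

From mathcomp Require Import all_boot all_order all_algebra.
From mathcomp Require Import ring.
Import GRing.Theory Num.Theory.
Set Implicit Arguments. Unset Strict Implicit.
Local Open Scope ring_scope.

(* Bilinearity and symmetry give the polarization identity
   λ(x+y,x+y) - λ(x,x) - λ(y,y) = 2λ(x,y) in Q/Z, and multiplying it by the
   integer 2^(k-1) gives the identity for q_k.  For well-definedness write
   x = x' + d with 2^k d = 0; polarization gives
   q_k(x) - q_k(x') = 2^k λ(x',d) + q_k(d), where 2^k λ(x',d) = λ(x', 2^k d) = 0
   and q_k(d) = 2^(k-1) λ(d,d) is an integer because b_k is alternating. *)

Lemma eqQZ_mulzl m a b : m \is a Num.int -> eqQZ a b -> eqQZ (m * a) (m * b).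
Proof. by move=> m_int ab; rewrite /eqQZ -mulrBr rpredM. Qed.

Lemma exp2_int n : (2 ^+ n : rat) \is a Num.int.
Proof. by apply: rpredX; apply: (@rpred_nat _ _ 2). Qed.

Section LinkingPairing.
Variables (G : finZmodType) (lam : G -> G -> rat).
Hypothesis lamP : linking_pairing lam.

Lemma lamr0_int x : lam x 0 \is a Num.int.
Proof.
have [_ [_ lamDr]] := lamP; have := lamDr x 0 0; rewrite addr0 /eqQZ.
have -> : lam x 0 - (lam x 0 + lam x 0) = - lam x 0 by ring.
by rewrite rpredN.
Qed.

Lemma lamrMn x y n : eqQZ (lam x (y *+ n)) (lam x y *+ n).
Proof.
have [_ [_ lamDr]] := lamP; elim: n => [|n IHn].
  by rewrite mulr0n /eqQZ subr0 lamr0_int.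
rewrite /eqQZ mulrSr mulrS.
have -> : lam x (y *+ n + y) - (lam x y + lam x y *+ n)
        = (lam x (y *+ n + y) - (lam x (y *+ n) + lam x y))
          + (lam x (y *+ n) - lam x y *+ n) by ring.
exact: rpredD (lamDr _ _ _) IHn.
Qed.

Lemma lam_polar x y :
  eqQZ (lam (x + y) (x + y) - lam x x - lam y y) (2 * lam x y).
Proof.
have [lamC [lamDl lamDr]] := lamP; rewrite /eqQZ.
have -> : lam (x + y) (x + y) - lam x x - lam y y - 2 * lam x y
        = (lam (x + y) (x + y) - (lam x (x + y) + lam y (x + y)))
          + (lam x (x + y) - (lam x x + lam x y))
          + (lam y (x + y) - (lam y x + lam y y))
          + (lam y x - lam x y) by ring.
exact: rpredD (rpredD (rpredD (lamDl _ _ _) (lamDr _ _ _)) (lamDr _ _ _)) (lamC _ _).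
Qed.

Lemma qk_polar k x y : (0 < k)%N ->
  eqQZ (qk lam k (x + y) - qk lam k x - qk lam k y) (2 ^+ k * lam x y).
Proof.
move=> k_gt0; rewrite /qk -!mulrBr.
have -> : (2 ^+ k : rat) = 2 ^+ k.-1 * 2 by rewrite -exprSr prednK.
rewrite -mulrA.
exact: eqQZ_mulzl (exp2_int _) (lam_polar x y).
Qed.

Lemma lam_torsion_int k x d : Gk k d -> 2 ^+ k * lam x d \is a Num.int.
Proof.
move/eqP=> tors; have := lamrMn x d (2 ^ k)%N.
rewrite tors /eqQZ -natrX mulr_natl => lam_int.
have -> : lam x d *+ 2 ^ k = lam x 0 - (lam x 0 - lam x d *+ 2 ^ k) by ring.
by rewrite rpredB ?lamr0_int.
Qed.

Lemma qk_torsion_int k d : (0 < k)%N -> layer_alternating lam k ->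
  Gk k d -> qk lam k d \is a Num.int.
Proof.
move=> k_gt0 alt /alt; rewrite /qk -{1}(prednK k_gt0) exprSr.
by have -> : 2 ^+ k.-1 * 2 * lam d d / 2 = 2 ^+ k.-1 * lam d d by field.
Qed.

Lemma qk_well_defined k x x' : (0 < k)%N -> layer_alternating lam k ->
  Gk k (x - x') -> eqQZ (qk lam k x) (qk lam k x').
Proof.
move=> k_gt0 alt tors; have := qk_polar x' (x - x') k_gt0.
rewrite [x' + _]addrC subrK /eqQZ => polar.
have -> : qk lam k x - qk lam k x'
        = (qk lam k x - qk lam k x' - qk lam k (x - x') - 2 ^+ k * lam x' (x - x'))
          + qk lam k (x - x') + 2 ^+ k * lam x' (x - x') by ring.
exact: rpredD (rpredD polar (qk_torsion_int k_gt0 alt tors))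
              (lam_torsion_int _ tors).
Qed.

End LinkingPairing.

Theorem proposition5p12 (G : finZmodType) (lam : G -> G -> rat) (k : nat) :
  (2%N).-nat #|G| ->
  linking_pairing lam -> nonsingular lam ->
  (1 <= k)%N ->
  layer_alternating lam k ->
  (* q_k is well defined on H_k(G) = G / G_k *)
  (forall x x', Gk k (x - x') -> eqQZ (qk lam k x) (qk lam k x')) /\
  (* q_k(x+y) - q_k(x) - q_k(y) = 2^k lam(x,y) in Q/Z *)
  (forall x y, eqQZ (qk lam k (x + y) - qk lam k x - qk lam k y)
                    (2 ^+ k * lam x y)).
Proof.
move=> _ lamP _ k_gt0 alt; split=> x y.
- exact: qk_well_defined.
- exact: qk_polar.
Qed.
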